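(* Let $\mathcal{Y}$ be a linear subspace of $\mathbb{R}^n$ and let $\mathbf{L}\in\widehat{\mathcal{Y}}$ satisfy $\mathbf{L}(x)\preceq\mathbf{C}\odot\|x\|$ for all $x\in\mathcal{Y}$, where $\mathbf{C}$ is a closed bounded interval. Then $\|\mathbf{L}(x)\|_{I(\mathbb{R})}\le\|\mathbf{C}\|_{I(\mathbb{R})}\|x\|$ for all $x\in\mathcal{Y}$.
   Context: $I(\mathbb{R})$: nonempty compact intervals $\mathbf{A}=[\underline{a},\overline{a}]$; $\mathbf{A}\oplus\mathbf{B}=[\underline{a}+\underline{b},\overline{a}+\overline{b}]$; $\lambda\odot\mathbf{A}=[\min\{\lambda\underline{a},\lambda\overline{a}\},\max\{\lambda\underline{a},\lambda\overline{a}\}]$; $\mathbf{A}\ominus_{gH}\mathbf{B}=[\min\{\underline{a}-\underline{b},\overline{a}-\overline{b}\},\max\{\underline{a}-\underline{b},\overline{a}-\overline{b}\}]$; $\mathbf{A}\preceq\mathbf{B}$ iff $\underline{a}\le\underline{b}$ and $\overline{a}\le\overline{b}$; $\|\mathbf{A}\|_{I(\mathbb{R})}=\max\{|\underline{a}|,|\overline{a}|\}$; $\|\cdot\|$ is the Euclidean norm. An IVF $\mathbf{L}:\mathcal{Y}\to I(\mathbb{R})$ on a linear subspace is linear if (i) $\mathbf{L}(\lambda x)=\lambda\odot\mathbf{L}(x)$ for all $x\in\mathcal{Y}$, $\lambda\in\mathbb{R}$, and (ii) for all $x,y\in\mathcal{Y}$, either $\mathbf{L}(x)\oplus\mathbf{L}(y)=\mathbf{L}(x+y)$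 or neither of $\mathbf{L}(x)\oplus\mathbf{L}(y)$ and $\mathbf{L}(x+y)$ dominates the other w.r.t. $\preceq$. It is $gH$-continuous if $\lim_{\|d\|\to0}(\mathbf{L}(x+d)\ominus_{gH}\mathbf{L}(x))=\mathbf{0}$ at every $x$. $\widehat{\mathcal{Y}}$ denotes the set of all $gH$-continuous linear IVFs on $\mathcal{Y}$. *)

From HB Require Import structures.
From mathcomp Require Import all_boot all_order all_algebra.
From mathcomp Require Import reals.
Set Implicit Arguments. Unset Strict Implicit. Unset Printing Implicit Defensive.
Import Order.TTheory GRing.Theory Num.Theory.
Local Open Scope ring_scope.

Section Intervals.
Variable R : realType.

Record Itv := MkItv { lo : R; hi : R; lo_le_hi : lo <= hi }.

Lemma min_le_max_aux (a b : R) : Num.min a b <= Num.max a b.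
Proof. by rewrite ge_min !le_max lexx. Qed.

Lemma add_ok (A B : Itv) : lo A + lo B <= hi A + hi B.
Proof. by apply: lerD; apply: lo_le_hi. Qed.

Definition itv_add (A B : Itv) : Itv := MkItv (add_ok A B).

Definition itv_scale (l : R) (A : Itv) : Itv :=
  MkItv (min_le_max_aux (l * lo A) (l * hi A)).

Definition itv_gHsub (A B : Itv) : Itv :=
  MkItv (min_le_max_aux (lo A - lo B) (hi A - hi B)).

Definition itv_le (A B : Itv) : Prop := lo A <= lo B /\ hi A <= hi B.

Definition itv_norm (A : Itv) : R := Num.max `|lo A| `|hi A|.

End Intervals.

Arguments Itv : clear implicits.

Definition enorm (R : realType) (n : nat) (x : 'rV[R]_n) : R :=
  Num.sqrt (\sum_(i < n) x ord0 i ^+ 2).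

Definition ivf_linear (R : realType) (n : nat) (Y : {vspace 'rV[R]_n})
    (L : 'rV[R]_n -> Itv R) : Prop :=
  (forall x, x \in Y -> forall l : R, L (l *: x) = itv_scale l (L x)) /\
  (forall x y, x \in Y -> y \in Y ->
     itv_add (L x) (L y) = L (x + y) \/
     (~ itv_le (itv_add (L x) (L y)) (L (x + y)) /\
      ~ itv_le (L (x + y)) (itv_add (L x) (L y)))).

Definition ivf_gH_continuous (R : realType) (n : nat) (Y : {vspace 'rV[R]_n})
    (L : 'rV[R]_n -> Itv R) : Prop :=
  forall x, x \in Y -> forall eps : R, 0 < eps -> exists2 delta : R, 0 < delta &
    forall d, d \in Y -> enorm d < delta ->
      itv_norm (itv_gHsub (L (x + d)) (L x)) < eps.

Definition Yhat (R : realType) (n : nat) (Y : {vspace 'rV[R]_n})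
    (L : 'rV[R]_n -> Itv R) : Prop :=
  ivf_linear Y L /\ ivf_gH_continuous Y L.

(** Since [L] is homogeneous, [L (-x) = -L x]; applying the bound [L y <= C ||y||]
    to both [y = x] and [y = -x] bounds [hi (L x)] and [- lo (L x)] by
    [||x|| hi C], and these two quantities control [max(|lo (L x)|, |hi (L x)|)]. *)
From HB Require Import structures.
From mathcomp Require Import all_boot all_order all_algebra.
From mathcomp Require Import reals.
Set Implicit Arguments. Unset Strict Implicit. Unset Printing Implicit Defensive.
Import Order.TTheory GRing.Theory Num.Theory.
Local Open Scope ring_scope.

Section IntervalFacts.
Variable R : realType.
Implicit Types (A : Itv R) (l r : R).

Lemma hi_itv_scale_ge0 l A : 0 <= l -> hi (itv_scale l A) = l * hi A.
Proof. by move=> l_ge0; apply/max_idPr; rewrite ler_wpM2l // lo_le_hi. Qed.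

Lemma hi_itv_scaleN1 A : hi (itv_scale (-1) A) = - lo A.
Proof. by rewrite /= !mulN1r; apply/max_idPl; rewrite lerN2 lo_le_hi. Qed.

Lemma hi_le_itv_norm A : hi A <= itv_norm A.
Proof. by rewrite /itv_norm le_max ler_norm orbT. Qed.

Lemma itv_norm_le A r : hi A <= r -> - lo A <= r -> itv_norm A <= r.
Proof.
move=> hi_le lo_le; have lo_hi := lo_le_hi A.
have hi_ge : - hi A <= r by apply: le_trans lo_le; rewrite lerN2.
by rewrite ge_max !ler_norml !(lerNl r) lo_le hi_ge hi_le (le_trans lo_hi).
Qed.

End IntervalFacts.

Lemma enormN (R : realType) (n : nat) (x : 'rV[R]_n) : enorm (- x) = enorm x.
Proof. by congr Num.sqrt; apply: eq_bigr => i _; rewrite mxE sqrrN. Qed.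

Lemma enorm_ge0 (R : realType) (n : nat) (x : 'rV[R]_n) : 0 <= enorm x.
Proof. exact: sqrtr_ge0. Qed.

Lemma ivf_linearN (R : realType) (n : nat) (Y : {vspace 'rV[R]_n})
    (L : 'rV[R]_n -> Itv R) (x : 'rV[R]_n) :
  ivf_linear Y L -> x \in Y -> L (- x) = itv_scale (-1) (L x).
Proof. by move=> [L_scale _] xY; rewrite -L_scale // scaleN1r. Qed.

Theorem mainTheorem3 (R : realType) (n : nat) (Y : {vspace 'rV[R]_n})
    (L : 'rV[R]_n -> Itv R) (C : Itv R) :
  Yhat Y L ->
  (forall x, x \in Y -> itv_le (L x) (itv_scale (enorm x) C)) ->
  forall x, x \in Y -> itv_norm (L x) <= itv_norm C * enorm x.
Proof.
move=> [L_lin _] L_le x xY.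
have t_ge0 := enorm_ge0 x.
have hi_le : hi (L x) <= enorm x * hi C.
  by have [_] := L_le x xY; rewrite hi_itv_scale_ge0.
have lo_le : - lo (L x) <= enorm x * hi C.
  have [_] : itv_le (L (- x)) (itv_scale (enorm (- x)) C).
    by apply: L_le; rewrite memvN.
  by rewrite (ivf_linearN L_lin xY) hi_itv_scaleN1 enormN hi_itv_scale_ge0.
apply: (le_trans (itv_norm_le hi_le lo_le)).
by rewrite [leRHS]mulrC ler_wpM2l // hi_le_itv_norm.
Qed.
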